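(* For any model $M$ (on $n$ variables), $M_{\wedge,\to}$ is contained in $U(n)_{\wedge,\to}$. In particular, $M_{\wedge,\to}$ is a generated submodel of $U(n)$ in which every chain has at most $n$ elements, and $M_{\wedge,\to}$ (as well as $U(n)_{\wedge,\to}$) is finite.
   Context: Fix $n\ge1$ and variables $p_1,\dots,p_n$; $2^n=\{0,1\}^n$ with componentwise order. A model is $(M,\le,c)$, $(M,\le)$ a poset, $c:M\to 2^n$ order-preserving, with intuitionistic Kripke semantics ($x\models p_i$ iff $c(x)_i=1$). A p-morphism of models is an order- and colour-preserving map $f$ such that $f(x)\le y$ implies $f(x')=y$ for some $x'\ge x$. A generated submodel is an up-set with the restricted structure. A point $x$ is separated if for some variable $q$, $x\not\models q$ but all $y>x$ satisfy $q$. $M^s$ is the set of separated points of $M$ with restricted order and colouring; all chains in $M^s$ have at most $n$ elements. $U(n)$ is the $n$-universal model: the generated submodel of the canonical model of IPC on $p_1,\dots,p_n$ (prime filters of the free Heyting algebra on $p_1,\dots,p_n$ ordered by inclusion, $c(x)_i=1$ iff $p_i\in x$) consisting of points with finite up-set. For every model $N$ of finite depth there is a unique p-morphism $N\to U(n)$. For a model $M$, with $f:M^s\to U(n)$ the unique p-morphism, $M_{\wedge,\to}:=f(M^s)$, a generated submodel of $U(n)$; $U(n)_{\wedge,\to}$ is the case $M=U(n)$. *)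

From mathcomp Require Import ssreflect ssrfun ssrbool eqtype ssrnat fintype.
From Stdlib Require Import List FunctionalExtensionality PropExtensionality ProofIrrelevance.
Set Implicit Arguments.
Unset Strict Implicit.

(** The colour c(x) in 2^n is represented as a predicate on 'I_n
    (c(x)_i = 1 iff col x i); the componentwise order on 2^n is inclusion. *)
Record model (n : nat) := Model {
  carrier :> Type;
  le : carrier -> carrier -> Prop;
  le_refl : forall x, le x x;
  le_trans : forall x y z, le x y -> le y z -> le x z;
  le_antisym : forall x y, le x y -> le y x -> x = y;
  col : carrier -> 'I_n -> Prop;
  col_mono : forall x y i, le x y -> col x i -> col y i }.
Arguments le {n M} x y : rename.
Arguments col {n M} x i : rename.

Section Sub.
Variables (n : nat) (M : model n) (P : M -> Prop).
Definition sub_le (x y : {x : M | P x}) : Prop := le (proj1_sig x) (proj1_sig y).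
Definition sub_col (x : {x : M | P x}) (i : 'I_n) : Prop := col (proj1_sig x) i.
Lemma sub_refl x : sub_le x x. Proof. exact: le_refl. Qed.
Lemma sub_trans x y z : sub_le x y -> sub_le y z -> sub_le x z.
Proof. exact: le_trans. Qed.
Lemma sub_antisym x y : sub_le x y -> sub_le y x -> x = y.
Proof.
case: x => x Px; case: y => y Py /= H1 H2.
have E : x = y by apply: le_antisym.
subst y; by rewrite (proof_irrelevance _ Px Py).
Qed.
Lemma sub_mono x y i : sub_le x y -> sub_col x i -> sub_col y i.
Proof. exact: col_mono. Qed.
Definition submodel : model n :=
  @Model n {x : M | P x} sub_le sub_refl sub_trans sub_antisym sub_col sub_mono.
End Sub.

Definition separated n (M : model n) (x : M) : Prop :=
  exists i : 'I_n, ~ col x i /\ (forall y : M, le x y -> y <> x -> col y i).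

Definition sep_model n (M : model n) : model n := submodel (@separated n M).

Definition is_pmorphism n (M N : model n) (f : M -> N) : Prop :=
  (forall x y : M, le x y -> le (f x) (f y)) /\
  (forall (x : M) i, col (f x) i <-> col x i) /\
  (forall (x : M) (y : N), le (f x) y -> exists x' : M, le x x' /\ f x' = y).

Definition upset n (M : model n) (P : M -> Prop) : Prop :=
  forall x y : M, P x -> le x y -> P y.
Definition finite_set (T : Type) (P : T -> Prop) : Prop :=
  exists l : list T, forall x, P x -> In x l.
Definition chains_at_most n (M : model n) (P : M -> Prop) (k : nat) : Prop :=
  forall l : list M, NoDup l -> (forall x, In x l -> P x) ->
    (forall x y, In x l -> In y l -> le x y \/ le y x) -> length l <= k.

Inductive form (n : nat) : Type :=
| FVar : 'I_n -> form n
| FBot : form n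
| FAnd : form n -> form n -> form n
| FOr  : form n -> form n -> form n
| FImp : form n -> form n -> form n.
Arguments FBot {n}.

Definition FTop n : form n := FImp FBot FBot.

Inductive prov (n : nat) : form n -> Prop :=
| ax_K a b : prov (FImp a (FImp b a))
| ax_S a b c : prov (FImp (FImp a (FImp b c)) (FImp (FImp a b) (FImp a c)))
| ax_andE1 a b : prov (FImp (FAnd a b) a)
| ax_andE2 a b : prov (FImp (FAnd a b) b)
| ax_andI a b : prov (FImp a (FImp b (FAnd a b)))
| ax_orI1 a b : prov (FImp a (FOr a b))
| ax_orI2 a b : prov (FImp b (FOr a b))
| ax_orE a b c : prov (FImp (FImp a c) (FImp (FImp b c) (FImp (FOr a b) c)))
| ax_efq a : prov (FImp FBot a)
| mp a b : prov (FImp a b) -> prov a -> prov b.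

(** Prime filters of the free Heyting algebra on p_1..p_n, i.e. of the
    Lindenbaum algebra of IPC (formulas ordered by provable implication),
    represented by the (provable-equivalence closed) sets of representatives. *)
Definition prime_filter n (F : form n -> Prop) : Prop :=
  F (FTop n) /\
  (forall a b, F a -> prov (FImp a b) -> F b) /\
  (forall a b, F a -> F b -> F (FAnd a b)) /\
  ~ F FBot /\
  (forall a b, F (FOr a b) -> F a \/ F b).

Section Canon.
Variable n : nat.
Definition canon_carrier := {F : form n -> Prop | prime_filter F}.
Definition canon_le (x y : canon_carrier) : Prop :=
  forall a, proj1_sig x a -> proj1_sig y a.
Definition canon_col (x : canon_carrier) (i : 'I_n) : Prop := proj1_sig x (FVar i).
Lemma canon_refl x : canon_le x x. Proof. by []. Qed.
Lemma canon_trans x y z : canon_le x y -> canon_le y z -> canon_le x z.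
Proof. by move=> H1 H2 a /H1 /H2. Qed.
Lemma canon_antisym x y : canon_le x y -> canon_le y x -> x = y.
Proof.
case: x => F PF; case: y => G PG /= H1 H2.
have E : F = G.
  apply: functional_extensionality => a; apply: propositional_extensionality.
  by split; [apply: H1 | apply: H2].
subst G; by rewrite (proof_irrelevance _ PF PG).
Qed.
Lemma canon_mono x y i : canon_le x y -> canon_col x i -> canon_col y i.
Proof. by move=> H; apply: H. Qed.
Definition canonical_model : model n :=
  @Model n canon_carrier canon_le canon_refl canon_trans canon_antisym canon_col canon_mono.
End Canon.

Definition U (n : nat) : model n :=
  submodel (fun x : canonical_model n => finite_set (fun y : canonical_model n => le x y)).

(** M_{wedge,->} := f(M^s) where f : M^s -> U(n) is the (unique) p-morphism. *)
Definition M_wedge_to n (M : model n) : U n -> Prop :=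
  fun u => exists f : sep_model M -> U n,
    is_pmorphism f /\ exists x : sep_model M, f x = u.

Definition U_wedge_to (n : nat) : U n -> Prop := M_wedge_to (U n).

(* On a model carrying a rank that strictly decreases along the strict order, the theory
   map x |-> {phi | x forces phi} is a p-morphism into U(n).  A theory is determined by
   the colour of its point and the theories of the strict successors, so by induction on the
   rank only finitely many theories occur, which makes the up-sets of the image finite; the
   back condition holds at a maximal successor whose theory lies in the given prime filter.
   On M^s the number of variables not forced is such a rank, bounded by n.  By the truth
   lemma for U(n), every p-morphism M^s -> U(n) sends a point to its theory; so M_{/\,->}
   consists of theories of rank at most n, all points above it are separated in U(n), and
   each of its points is its own image under the theory map of U(n)^s.  Along a chain of
   separated points the number of unforced variables strictly decreases and stays between
   1 and n. *)

From mathcomp Require Import ssreflect ssrfun ssrbool eqtype ssrnat fintype.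
From mathcomp Require Import choice seq finset boolp zify.
From Stdlib Require Import List ClassicalEpsilon FunctionalExtensionality PropExtensionality.
From Stdlib Require Import ProofIrrelevance Lia.
Set Implicit Arguments.
Unset Strict Implicit.

Lemma proj1_sig_inj (A : Type) (P : A -> Prop) : injective (@proj1_sig A P).
Proof. by case=> x px [y py] /= Exy; subst y; rewrite (proof_irrelevance _ px py). Qed.

Lemma finite_set_sub (T : Type) (P Q : T -> Prop) :
  (forall x, P x -> Q x) -> finite_set Q -> finite_set P.
Proof. by move=> sPQ [l Hl]; exists l => x /sPQ /Hl. Qed.

Lemma finite_set_ord n : finite_set (fun _ : 'I_n => True).
Proof.
exists (enum 'I_n) => i _.
have : i \in enum 'I_n by rewrite mem_enum.
by elim: (enum 'I_n) => //= j s IHs; rewrite inE => /orP [/eqP ->|/IHs]; [left|right].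
Qed.

Lemma finite_set_image2 (A B C : Type) (f : A -> B -> C) (P : A -> Prop) (Q : B -> Prop) :
  finite_set P -> finite_set Q -> finite_set (fun z => exists x y, P x /\ Q y /\ z = f x y).
Proof.
move=> [lP HP] [lQ HQ]; exists (flat_map (fun x => map (f x) lQ) lP).
move=> _ [x [y [Px [Qy ->]]]]; apply/in_flat_map; exists x; split; first exact: HP.
exact/in_map/HQ.
Qed.

Fixpoint sublists (T : Type) (l : list T) : list (list T) :=
  if l is x :: l then map (cons x) (sublists l) ++ sublists l else nil :: nil.

Lemma filter_in_sublists (T : Type) (f : T -> bool) l : In (List.filter f l) (sublists l).
Proof.
elim: l => [|x l IHl] /=; first by left.
by apply/in_or_app; case: (f x); [left; apply: in_map|right].
Qed.

(* A subset of [P] is the set of members of a sublist of a list covering [P]. *)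
Lemma finite_set_subsets (T : Type) (P : T -> Prop) :
  finite_set P -> finite_set (fun Q : T -> Prop => forall x, Q x -> P x).
Proof.
move=> [l Hl]; exists (map (fun s x => In x s) (sublists l)) => Q sQP.
have -> : Q = fun x => In x (List.filter (fun x => `[< Q x >]) l).
  apply: functional_extensionality => x; apply: propositional_extensionality.
  rewrite filter_In; split=> [Qx|[_ /asboolP //]].
  by split; [apply/Hl/sQP | apply/asboolP].
exact/in_map/filter_in_sublists.
Qed.

Lemma finite_set_preimage (A B : Type) (f : A -> B) (Q : B -> Prop) :
  injective f -> finite_set Q -> finite_set (fun x => Q (f x)).
Proof.
move=> f_inj [l Hl].
exists (flat_map (fun b => match excluded_middle_informative (exists a, f a = b) with
                           | left H => proj1_sig (constructive_indefinite_description _ H) :: nil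
                           | right _ => nil end) l).
move=> x /Hl Hfx; apply/in_flat_map; exists (f x); split=> //.
destruct (excluded_middle_informative _) as [H|nH]; last by case: nH; exists x.
by left; case: (constructive_indefinite_description _ H) => y /= /f_inj.
Qed.

Section Forcing.
Variable n : nat.

Fixpoint force (M : model n) (x : M) (phi : form n) : Prop :=
  match phi with
  | FVar i => col x i
  | FBot => False
  | FAnd a b => force x a /\ force x b
  | FOr a b => force x a \/ force x b
  | FImp a b => forall y : M, le x y -> force y a -> force y b
  end.

Lemma force_mono (M : model n) (phi : form n) (x y : M) :
  le x y -> force x phi -> force y phi.
Proof.
elim: phi x y => [i||a IHa b IHb|a IHa b IHb|a IHa b IHb] x y le_xy /=.
- exact: col_mono.
- by [].
- by case=> Ha Hb; split; [apply: IHa Ha | apply: IHb Hb].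
- by case=> [Ha|Hb]; [left; apply: IHa Ha | right; apply: IHb Hb].
- by move=> Hab z le_yz; apply: Hab; apply: le_trans le_yz.
Qed.

Lemma prov_force (phi : form n) : prov phi -> forall (M : model n) (x : M), force x phi.
Proof.
elim=> {phi} /=.
- by move=> a b M x y _ Ha z le_yz _; apply: force_mono Ha.
- move=> a b c M x y _ Habc z le_yz Hab w le_zw Ha.
  exact: (Habc w (le_trans le_yz le_zw) Ha w (le_refl _) (Hab w le_zw Ha)).
- by move=> a b M x y _ [].
- by move=> a b M x y _ [].
- by move=> a b M x y _ Ha z le_yz Hb; split=> //; apply: force_mono Ha.
- by move=> a b M x y _ Ha; left.
- by move=> a b M x y _ Hb; right.
- move=> a b c M x y _ Hac z le_yz Hbc w le_zw [Ha|Hb]; last exact: Hbc Hb.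
  exact: Hac (le_trans le_yz le_zw) Ha.
- by [].
- by move=> a b _ Hab _ Ha M x; apply: (Hab M x x (le_refl _)).
Qed.

Definition theory (M : model n) (x : M) : form n -> Prop := force x.

Lemma theory_prime_filter (M : model n) (x : M) : prime_filter (theory x).
Proof.
split; [by move=> y _ [] | split; last by do !split].
by move=> a b Ha /prov_force /(_ M x x (le_refl _)); apply.
Qed.

Lemma force_pmorphism_on (M N : model n) (f : M -> N) (P : M -> Prop) :
  upset P ->
  (forall x y, le x y -> le (f x) (f y)) ->
  (forall x i, col (f x) i <-> col x i) ->
  (forall x, P x -> forall y, le (f x) y -> exists x', le x x' /\ f x' = y) ->
  forall phi x, P x -> (force (f x) phi <-> force x phi).
Proof.
move=> upP f_mono f_col f_back phi.
elim: phi => [i||a IHa b IHb|a IHa b IHb|a IHa b IHb] x Px /=.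
- exact: f_col.
- by [].
- by rewrite (IHa x Px) (IHb x Px).
- by rewrite (IHa x Px) (IHb x Px).
- split=> Hab y.
  + move=> le_xy /(IHa y (upP _ _ Px le_xy)) Ha.
    by apply/(IHb y (upP _ _ Px le_xy)); apply: Hab (f_mono _ _ le_xy) Ha.
  + move=> /(f_back x Px) [x' [le_xx' <-]].
    move=> /(IHa x' (upP _ _ Px le_xx')) Ha.
    by apply/(IHb x' (upP _ _ Px le_xx')); apply: Hab.
Qed.

Lemma theory_pmorphism (M N : model n) (f : M -> N) (x : M) :
  is_pmorphism f -> theory (f x) = theory x.
Proof.
case=> f_mono [f_col f_back].
apply: functional_extensionality => phi; apply: propositional_extensionality.
apply: (@force_pmorphism_on _ _ f (fun _ => True)) => // y _; exact: f_back.
Qed.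

End Forcing.

Section Derivations.
Variable n : nat.
Implicit Types (G : form n -> Prop) (a b c : form n).

Inductive derivable G : form n -> Prop :=
| der_hyp a : G a -> derivable G a
| der_prov a : prov a -> derivable G a
| der_mp a b : derivable G (FImp a b) -> derivable G a -> derivable G b.

Definition add_hyp G a : form n -> Prop := fun b => G b \/ b = a.

Lemma prov_id a : prov (FImp a a).
Proof. exact: mp (mp (ax_S a (FImp a a) a) (ax_K a (FImp a a))) (ax_K a a). Qed.

Lemma derivable_sub G G' a : (forall b, G b -> G' b) -> derivable G a -> derivable G' a.
Proof.
move=> sGG'; elim=> {a} [a /sGG'|a|a b _ Hab _ Ha]; [exact: der_hyp|exact: der_prov|].
exact: der_mp Hab Ha.
Qed.

Lemma deduction G a b : derivable (add_hyp G a) b -> derivable G (FImp a b).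
Proof.
elim=> {b} [b [Gb|->]|b Hb|b c _ Hbc _ Hb].
- exact: der_mp (der_prov _ (ax_K b a)) (der_hyp Gb).
- exact: der_prov (prov_id a).
- exact: der_mp (der_prov _ (ax_K b a)) (der_prov _ Hb).
- exact: der_mp (der_mp (der_prov _ (ax_S a b c)) Hbc) Hb.
Qed.

Lemma derivable_nil a : derivable (fun _ => False) a -> prov a.
Proof. by elim=> {a} // a b _ Hab _ Ha; apply: mp Hab Ha. Qed.

Lemma prime_filter_mp F a b : prime_filter F -> F a -> F (FImp a b) -> F b.
Proof.
move=> [_ [F_prov [F_and _]]] Fa Fab; apply: F_prov (F_and _ _ Fa Fab) _.
apply/derivable_nil/deduction.
have Hab : derivable (add_hyp (fun _ => False) (FAnd a (FImp a b))) (FAnd a (FImp a b)).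
  by apply: der_hyp; right.
exact: der_mp (der_mp (der_prov _ (ax_andE2 _ _)) Hab) (der_mp (der_prov _ (ax_andE1 _ _)) Hab).
Qed.

Lemma prime_filter_derivable F a : prime_filter F -> derivable F a -> F a.
Proof.
move=> pF; elim=> {a} [//|a Ha|a b _ Fab _ Fa]; last exact: prime_filter_mp Fa Fab.
case: pF => [F_top [F_prov _]]; apply: F_prov F_top _.
exact: mp (ax_K a (FTop n)) Ha.
Qed.

Fixpoint form_code (phi : form n) : GenTree.tree 'I_n :=
  match phi with
  | FVar i => GenTree.Leaf i
  | FBot => GenTree.Node 0 nil
  | FAnd a b => GenTree.Node 1 (form_code a :: form_code b :: nil)
  | FOr a b => GenTree.Node 2 (form_code a :: form_code b :: nil)
  | FImp a b => GenTree.Node 3 (form_code a :: form_code b :: nil)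
  end.

Fixpoint form_decode (t : GenTree.tree 'I_n) : form n :=
  match t with
  | GenTree.Leaf i => FVar i
  | GenTree.Node 1 (a :: b :: nil) => FAnd (form_decode a) (form_decode b)
  | GenTree.Node 2 (a :: b :: nil) => FOr (form_decode a) (form_decode b)
  | GenTree.Node 3 (a :: b :: nil) => FImp (form_decode a) (form_decode b)
  | _ => FBot
  end.

Lemma form_codeK : cancel form_code form_decode.
Proof. by elim=> //= a -> b ->. Qed.

Definition nth_form (k : nat) : form n := odflt FBot (omap form_decode (unpickle k)).

Lemma nth_form_surj phi : exists k, nth_form k = phi.
Proof. by exists (pickle (form_code phi)); rewrite /nth_form pickleK /= form_codeK. Qed.

Section Lindenbaum.
Variables (G : form n -> Prop) (b : form n).
Hypothesis G_nb : ~ derivable G b.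

Fixpoint lind_stage (k : nat) : form n -> Prop :=
  match k with
  | 0 => G
  | k.+1 => if excluded_middle_informative (derivable (add_hyp (lind_stage k) (nth_form k)) b)
            then lind_stage k else add_hyp (lind_stage k) (nth_form k)
  end.

Lemma lind_stage_mono i j a : i <= j -> lind_stage i a -> lind_stage j a.
Proof.
elim: j => [|j IHj]; first by rewrite leqn0 => /eqP ->.
rewrite leq_eqVlt ltnS => /orP [/eqP -> //|/IHj Hj /Hj] /=.
by destruct (excluded_middle_informative _) => //; left.
Qed.

Lemma lind_stage_nb k : ~ derivable (lind_stage k) b.
Proof. by elim: k => [|k IHk] //=; destruct (excluded_middle_informative _). Qed.

Definition lind_limit : form n -> Prop := fun a => exists k, lind_stage k a.

Lemma lind_limit_compact a : derivable lind_limit a -> exists k, derivable (lind_stage k) a.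
Proof.
elim=> {a} [a [k Hk]|a Ha|a c _ [k1 H1] _ [k2 H2]].
- by exists k; apply: der_hyp.
- by exists 0; apply: der_prov.
- exists (maxn k1 k2); apply: der_mp.
  + by apply: derivable_sub H1 => d; apply: lind_stage_mono; rewrite leq_maxl.
  + by apply: derivable_sub H2 => d; apply: lind_stage_mono; rewrite leq_maxr.
Qed.

Lemma lind_limit_nb : ~ derivable lind_limit b.
Proof. by case/lind_limit_compact=> k; apply: lind_stage_nb. Qed.

Lemma lind_limit_reject a : ~ lind_limit a -> derivable lind_limit (FImp a b).
Proof.
move=> Ha; have [k Ek] := nth_form_surj a.
have : ~ lind_stage k.+1 a by move=> Hk; apply: Ha; exists k.+1.
rewrite /= Ek; destruct (excluded_middle_informative _) as [Hder|nHder]; last by case; right.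
move=> _.
apply: deduction; apply: derivable_sub Hder => c [Hc|->]; [by left; exists k|by right].
Qed.

Lemma lind_limit_closed a : derivable lind_limit a -> lind_limit a.
Proof.
move=> Ha; apply: NNPP => nHa; apply: lind_limit_nb.
exact: der_mp (lind_limit_reject nHa) Ha.
Qed.

Lemma lind_limit_prime : prime_filter lind_limit.
Proof.
split; [|split; [|split; [|split]]].
- exact/lind_limit_closed/der_prov/ax_efq.
- move=> a c Ha Hac; apply: lind_limit_closed.
  exact: der_mp (der_prov _ Hac) (der_hyp Ha).
- move=> a c Ha Hc; apply: lind_limit_closed.
  exact: der_mp (der_mp (der_prov _ (ax_andI a c)) (der_hyp Ha)) (der_hyp Hc).
- by move=> Hbot; apply: lind_limit_nb; apply: der_mp (der_prov _ (ax_efq b)) (der_hyp Hbot).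
- move=> a c Hac; apply: NNPP => nHac; apply: lind_limit_nb.
  have nHa : ~ lind_limit a by move=> ?; apply: nHac; left.
  have nHc : ~ lind_limit c by move=> ?; apply: nHac; right.
  apply: der_mp (der_hyp Hac).
  apply: der_mp (lind_limit_reject nHc); apply: der_mp (lind_limit_reject nHa).
  exact/der_prov/ax_orE.
Qed.

End Lindenbaum.

Lemma lindenbaum G b : ~ derivable G b ->
  exists F, prime_filter F /\ (forall a, G a -> F a) /\ ~ F b.
Proof.
move=> G_nb; exists (lind_limit G b); split; first exact: lind_limit_prime.
split; first by move=> a Ga; exists 0.
by move=> Fb; apply: (lind_limit_nb G_nb); apply: der_hyp.
Qed.

End Derivations.

Section TruthLemma.
Variable n : nat.

Definition Ufilter (u : U n) : form n -> Prop := proj1_sig (proj1_sig u).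

Lemma Ufilter_prime (u : U n) : prime_filter (Ufilter u).
Proof. exact: proj2_sig (proj1_sig u). Qed.

Lemma Ufilter_inj : injective Ufilter.
Proof. by move=> u v /proj1_sig_inj /proj1_sig_inj. Qed.

Lemma U_extend (u : U n) F : prime_filter F -> (forall a, Ufilter u a -> F a) ->
  exists v : U n, le u v /\ Ufilter v = F.
Proof.
move=> pF uF; pose x : canonical_model n := exist _ F pF.
have x_fin : finite_set (fun y : canonical_model n => le x y).
  have [l Hl] := proj2_sig u.
  by exists l => y le_xy; apply: Hl => a /uF /le_xy.
by exists (exist _ x x_fin).
Qed.

Lemma force_U (u : U n) phi : force u phi <-> Ufilter u phi.
Proof.
elim: phi u => [i||a IHa b IHb|a IHa b IHb|a IHa b IHb] u /=.
- by [].
- by split=> //; case: (Ufilter_prime u) => _ [_ [_ []]].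
- have [_ [F_prov [F_and _]]] := Ufilter_prime u.
  rewrite IHa IHb; split; first by case; apply: F_and.
  by move=> Hab; split; [apply: F_prov Hab (ax_andE1 _ _) | apply: F_prov Hab (ax_andE2 _ _)].
- have [_ [F_prov [_ [_ F_or]]]] := Ufilter_prime u.
  rewrite IHa IHb; split; last exact: F_or.
  by case=> H; [apply: F_prov H (ax_orI1 _ _) | apply: F_prov H (ax_orI2 _ _)].
- split=> [Hab|Hab v le_uv /IHa Ha]; last first.
    by apply/IHb; apply: prime_filter_mp (Ufilter_prime v) Ha (le_uv _ Hab).
  apply: NNPP => nHab.
  have nder : ~ derivable (add_hyp (Ufilter u) a) b.
    by move=> /deduction /(prime_filter_derivable (Ufilter_prime u)).
  have [F [pF [uaF nFb]]] := lindenbaum nder.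
  have [v [le_uv Fv]] := U_extend pF (fun c uc => uaF c (or_introl uc)).
  apply: nFb; rewrite -Fv; apply/IHb/(Hab v le_uv)/IHa.
  by rewrite Fv; apply: uaF; right.
Qed.

Lemma theory_U (u : U n) : theory u = Ufilter u.
Proof.
by apply: functional_extensionality => phi; apply: propositional_extensionality; apply: force_U.
Qed.

End TruthLemma.

Section RankedModels.
Variable n : nat.

Definition rank_function (N : model n) (m : N -> nat) : Prop :=
  forall x y : N, le x y -> y <> x -> m y < m x.

Lemma rank_maximal (N : model n) (m : N -> nat) (Q : N -> Prop) (x : N) :
  rank_function m -> Q x ->
  exists z, le x z /\ Q z /\ forall z', le z z' -> z' <> z -> ~ Q z'.
Proof.
move=> m_rank Qx.
suff : forall k z, m z < k -> le x z -> Q z ->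
    exists z0, le x z0 /\ Q z0 /\ forall z', le z0 z' -> z' <> z0 -> ~ Q z'.
  by apply; [exact: ltnSn | exact: le_refl | exact: Qx].
elim=> [//|k IHk] z mz le_xz Qz.
case: (classic (exists z', le z z' /\ z' <> z /\ Q z')) => [[z' [le_zz' [z'_z Qz']]]|none].
- apply: (IHk z') => //; last exact: le_trans le_xz le_zz'.
  by have := m_rank _ _ le_zz' z'_z; lia.
- by exists z; split=> //; split=> // z' le_zz' z'_z Qz'; apply: none; exists z'.
Qed.

(* Forcing at a point of colour [c] whose strict successors have the theories in [A]. *)
Fixpoint force_from (c : 'I_n -> Prop) (A : (form n -> Prop) -> Prop) (phi : form n) : Prop :=
  match phi with
  | FVar i => c i
  | FBot => False
  | FAnd a b => force_from c A a /\ force_from c A b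
  | FOr a b => force_from c A a \/ force_from c A b
  | FImp a b => (force_from c A a -> force_from c A b) /\ forall t, A t -> t a -> t b
  end.

Definition strict_up_theories (N : model n) (x : N) : (form n -> Prop) -> Prop :=
  fun t => exists y, le x y /\ y <> x /\ t = theory y.

Lemma theory_force_from (N : model n) (x : N) :
  theory x = force_from (col x) (strict_up_theories x).
Proof.
apply: functional_extensionality => phi; apply: propositional_extensionality.
rewrite /theory; elim: phi => [i||a IHa b IHb|a IHa b IHb|a IHa b IHb] //=.
- by rewrite IHa IHb.
- by rewrite IHa IHb.
- split=> [Hab|[Hab Aab] y le_xy].
  + split; first by rewrite -IHa -IHb; apply: Hab (le_refl x).
    by move=> _ [y [le_xy [_ ->]]]; apply: Hab.
  + case: (classic (y = x)) => [->|y_x]; first by rewrite IHa IHb.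
    by apply: Aab; exists y.
Qed.

Definition rank_bounded_theories (K : nat) : (form n -> Prop) -> Prop :=
  fun t => exists (N : model n) (m : N -> nat) (x : N), rank_function m /\ m x < K /\ t = theory x.

Lemma finite_rank_bounded_theories K : finite_set (rank_bounded_theories K).
Proof.
elim: K => [|K IHK]; first by exists nil => t [N [m [x [_ []]]]].
have finA := finite_set_subsets IHK.
have finc := finite_set_subsets (finite_set_ord n).
apply: finite_set_sub (finite_set_image2 force_from finc finA).
move=> _ [N [m [x [m_rank [mx ->]]]]].
exists (col x), (strict_up_theories x); split=> //; split; last exact: theory_force_from.
move=> _ [y [le_xy [y_x ->]]]; exists N, m, y; split=> //; split=> //.
by have := m_rank _ _ le_xy y_x; lia.
Qed.

End RankedModels.

(* The common formula is the disjunction of one witness for each filter. *)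
Lemma prime_filters_common_outside n (F : form n -> Prop) (L : list (form n -> Prop)) :
  prime_filter F -> exists d, ~ F d /\
    forall t, In t L -> prime_filter t -> ~ (forall a, t a -> F a) -> t d.
Proof.
move=> pF; elim: L => [|t L [d [Fd Ld]]].
  by exists FBot; split=> //; case: pF => _ [_ [_ []]].
case: (classic (forall a, t a -> F a)) => [tF|].
  by exists d; split=> // t' [<- _ /(_ tF) [] | /Ld].
move=> /not_all_ex_not [e] /(imply_to_and (t e)) [te Fe].
have [_ [F_prov [_ [_ F_or]]]] := pF.
exists (FOr e d); split; first by case/F_or.
move=> t' [<- [_ [t_prov _]] _|L_t' pt' t'F]; first exact: t_prov te (ax_orI1 _ _).
have [_ [t'_prov _]] := pt'; exact: t'_prov (Ld _ L_t' pt' t'F) (ax_orI2 _ _).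
Qed.

Section TheoryMap.
Variables (n : nat) (N : model n) (m : N -> nat).
Hypothesis m_rank : rank_function m.

Definition theory_point (x : N) : canonical_model n := exist _ (theory x) (theory_prime_filter x).

(* Take [z >= x] maximal with [theory z] inside [F].  If some [a] in [F] were not forced
   at [z], then [z] would force [a -> d] for a formula [d] outside [F] that holds at all
   strict successors of [z]. *)
Lemma theory_point_back (x : N) (F : canonical_model n) :
  le (theory_point x) F -> exists z, le x z /\ theory_point z = F.
Proof.
move=> le_xF; have pF := proj2_sig F.
have [z [le_xz [zF z_max]]] := rank_maximal (Q := fun z => le (theory_point z) F) m_rank le_xF.
exists z; split=> //; apply: proj1_sig_inj => /=.
apply: functional_extensionality => a; apply: propositional_extensionality.
split=> [/zF //|Fa]; apply: NNPP => nza.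
have [L HL] := finite_rank_bounded_theories n (m z).
have [d [nFd Ld]] := prime_filters_common_outside L pF.
have zad : theory z (FImp a d).
  move=> w le_zw wa; have w_z : w <> z by move=> E; apply: nza; rewrite -E.
  apply: (Ld (theory w)) (theory_prime_filter w) (z_max w le_zw w_z).
  by apply: HL; exists N, m, w; split=> //; split=> //; apply: m_rank.
exact/nFd/(prime_filter_mp pF Fa)/zF.
Qed.

Lemma theory_point_upset_finite (x : N) :
  finite_set (fun F : canonical_model n => le (theory_point x) F).
Proof.
apply: finite_set_sub (finite_set_preimage (@proj1_sig_inj _ _)
  (finite_rank_bounded_theories n (m x).+1)).
move=> F /theory_point_back [z [le_xz <-]]; exists N, m, z; split=> //; split=> //.
case: (classic (z = x)) => [->|z_x] //; exact: ltnW (m_rank le_xz z_x).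
Qed.

Definition theoryU (x : N) : U n := exist _ (theory_point x) (theory_point_upset_finite x).

Lemma theoryU_pmorphism : is_pmorphism theoryU.
Proof.
split; [|split=> //].
  by move=> x y le_xy a; apply: force_mono le_xy.
move=> x v /theory_point_back [z [le_xz Ez]]; exists z; split=> //.
by apply: Ufilter_inj; rewrite /Ufilter /= -Ez.
Qed.

End TheoryMap.

Section Separated.
Variable n : nat.

Definition unforced (M : model n) (x : M) : {set 'I_n} := [set i | `[< ~ col x i >]].

Lemma card_unforced_le (M : model n) (x : M) : #|unforced x| <= n.
Proof. by have := max_card (unforced x); rewrite card_ord. Qed.

Lemma card_unforced_gt0 (M : model n) (x : M) : separated x -> 0 < #|unforced x|.
Proof. by case=> i [nxi _]; apply/card_gt0P; exists i; rewrite inE; apply/asboolP. Qed.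

Lemma card_unforced_lt (M : model n) (x y : M) :
  separated x -> le x y -> y <> x -> #|unforced y| < #|unforced x|.
Proof.
move=> [i [nxi x_up]] le_xy y_x; apply: proper_card; apply/properP; split.
  by apply/subsetP=> j; rewrite !inE => /asboolP nyj; apply/asboolP => /(col_mono le_xy).
exists i; rewrite !inE; first exact/asboolP.
by apply/negP => /asboolP; apply; apply: x_up.
Qed.

Definition sep_rank (M : model n) (x : sep_model M) : nat := #|unforced (proj1_sig x)|.

Lemma rank_function_sep_rank (M : model n) : rank_function (@sep_rank M).
Proof.
move=> x y le_xy y_x; apply: card_unforced_lt (proj2_sig x) le_xy _.
by move/proj1_sig_inj.
Qed.

Lemma sep_model_separated (M : model n) (x : sep_model M) : separated x.
Proof.
have [i [nxi x_up]] := proj2_sig x; exists i; split=> // y le_xy y_x.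
by apply: x_up le_xy _ => /proj1_sig_inj.
Qed.

Lemma pmorphism_separated (M N : model n) (f : M -> N) (x : M) :
  is_pmorphism f -> separated x -> separated (f x).
Proof.
move=> [_ [f_col f_back]] [i [nxi x_up]]; exists i; split; first by move/f_col.
move=> y /(f_back x) [x' [le_xx' <-]] fx'_fx; apply/f_col.
by apply: x_up le_xx' _ => x'_x; apply: fx'_fx; rewrite x'_x.
Qed.

(* Comparable separated points with the same number of unforced variables coincide. *)
Lemma separated_chain_length (M : model n) (l : list M) :
  NoDup l -> (forall x, In x l -> separated x) ->
  (forall x y, In x l -> In y l -> le x y \/ le y x) -> length l <= n.
Proof.
move=> l_uniq l_sep l_chain.
have inj : ForallPairs (fun x y => #|unforced x| = #|unforced y| -> x = y) l.
  move=> x y lx ly Exy; apply: NNPP => x_y.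
  case: (l_chain x y lx ly) => [le_xy|le_yx].
  - by have := card_unforced_lt (l_sep x lx) le_xy (nesym x_y); rewrite Exy ltnn.
  - by have := card_unforced_lt (l_sep y ly) le_yx x_y; rewrite Exy ltnn.
have := NoDup_incl_length (NoDup_map_NoDup_ForallPairs _ inj l_uniq) (l' := List.seq 1 n).
rewrite length_map length_seq => H; apply/leP/H => _ /in_map_iff [x [<- lx]].
apply/in_seq; have := card_unforced_gt0 (l_sep x lx); have := card_unforced_le x; lia.
Qed.

End Separated.

Section WedgeTo.
Variable n : nat.

Lemma theory_submodel (M : model n) (P : M -> Prop) (x : submodel P) :
  (forall y, le (proj1_sig x) y -> P y) -> theory x = theory (proj1_sig x).
Proof.
move=> x_up; apply: functional_extensionality => phi; apply: propositional_extensionality.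
rewrite /theory; symmetry.
apply: (@force_pmorphism_on n _ M _
  (fun y : submodel P => forall z, le (proj1_sig y) z -> P z)) => //.
- by move=> y z y_up le_yz w le_zw; apply: y_up; apply: le_trans le_zw.
- by move=> y y_up v le_yv; exists (exist _ v (y_up v le_yv)).
Qed.

Lemma M_wedge_to_theory (M : model n) (u : U n) :
  M_wedge_to M u -> exists x : sep_model M, Ufilter u = theory x.
Proof. by move=> [f [pf [x <-]]]; exists x; rewrite -theory_U (theory_pmorphism x pf). Qed.

Lemma M_wedge_to_up_separated (M : model n) (u : U n) :
  M_wedge_to M u -> forall v, le u v -> separated v.
Proof.
move=> [f [pf [x <-]]] v /(proj2 (proj2 pf)) [x' [_ <-]].
exact: pmorphism_separated pf (sep_model_separated x').
Qed.

Lemma M_wedge_to_upset (M : model n) : upset (M_wedge_to M).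
Proof.
move=> _ v [f [pf [x <-]]] /(proj2 (proj2 pf)) [x' [_ <-]].
by exists f; split=> //; exists x'.
Qed.

(* Points of M^s have rank at most n, whatever M is. *)
Lemma M_wedge_to_finite : finite_set (fun u : U n => exists M : model n, M_wedge_to M u).
Proof.
apply: finite_set_sub (finite_set_preimage (@Ufilter_inj n) (finite_rank_bounded_theories n n.+1)).
move=> u [M /M_wedge_to_theory [x ->]]; exists (sep_model M), (@sep_rank n M), x.
by split; [exact: rank_function_sep_rank | split; [exact: card_unforced_le|]].
Qed.

(* A point all of whose successors are separated is its own image under the theory map of
   U(n)^s. *)
Lemma U_wedge_to_of_up_separated (u : U n) : (forall v, le u v -> separated v) -> U_wedge_to u.
Proof.
move=> u_up; exists (theoryU (@rank_function_sep_rank n (U n))).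
split; first exact: theoryU_pmorphism.
exists (exist _ u (u_up u (le_refl u))); apply: Ufilter_inj.
by rewrite -[Ufilter u]theory_U; apply: theory_submodel.
Qed.

End WedgeTo.

Theorem lemma3p8 (n : nat) (Hn : 1 <= n) (M : model n) :
  (forall u : U n, M_wedge_to M u -> U_wedge_to u) /\
  upset (M_wedge_to M) /\
  chains_at_most (M_wedge_to M) n /\
  finite_set (M_wedge_to M) /\
  finite_set (@U_wedge_to n).
Proof.
split; first by move=> u /M_wedge_to_up_separated; apply: U_wedge_to_of_up_separated.
split; first exact: M_wedge_to_upset.
split.
  move=> l l_uniq l_wedge; apply: separated_chain_length => // u /l_wedge u_wedge.
  exact: M_wedge_to_up_separated u_wedge u (le_refl u).
split; apply: finite_set_sub (@M_wedge_to_finite n) => u Hu; first by exists M.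
by exists (U n).
Qed.
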